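(* Let $\mathcal{X}$ be a finite alphabet and $\mathcal{W}=\{W_x\}_{x\in\mathcal{X}}$ a classical-quantum channel. Let $n,M$ be integers and $r\in(C_0(\mathcal{W}),C(\mathcal{W}))$. Let $\mathcal{T}_n(\mathcal{X})$ be the set of types of alphabet $\mathcal{X}$ and length $n$, and $\gamma_n=\frac12(n+1)^{-|\mathcal{X}|}$. Then \[ \varepsilon^{\rm NS}\big(M,\mathcal{W}^{\otimes n}\otimes\mathcal{I}_2\big)\ge\inf_{T\in\mathcal{T}_n(\mathcal{X})}\sup_{\sigma\in\mathcal{S}(\mathcal{H}),\,s\ge0}\Big\{\gamma_n\,\mathrm{Tr}\big[W_T^{\otimes n}\wedge Ms\,\sigma^{\otimes n}\big]-s\Big\}, \] where $W_T^{\otimes n}=\bigotimes_{x\in\mathcal{X}}W_x^{\otimes nT_x}$.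
   Context: $\mathcal{H}$ finite-dimensional Hilbert space, $\mathcal{S}(\mathcal{H})$ its density operators. A classical-quantum channel is $\mathcal{W}=\{W_x\}_{x\in\mathcal{X}}\subset\mathcal{S}(\mathcal{H})$. A type of length $n$ on $\mathcal{X}$ is a distribution $T=(T_x)_{x\in\mathcal{X}}$ with $nT_x\in\mathbb{N}$ for all $x$. For Hermitian $X=\sum_i\lambda_i\Pi_i$: $|X|=\sum_i|\lambda_i|\Pi_i$, and $A\wedge B=\frac12(A+B-|A-B|)$. For $M>0$: $1-\varepsilon^{\rm NS}(M,\mathcal{W})=\sup\{\frac1M\sum_x\mathrm{Tr}[\Lambda_xW_x]:\sum_x\Lambda_x=\mathbb{I},\ 0\preccurlyeq\Lambda_x\preccurlyeq p(x)\mathbb{I},\ p(x)\ge0,\ \sum_xp(x)=M\}$. $\mathcal{W}^{\otimes n}$ has alphabet $\mathcal{X}^n$ and outputs $W_{x_1}\otimes\cdots\otimes W_{x_n}$; $\mathcal{I}_2$ is the cq channel on $\{1,2\}$ with outputs $|i\rangle\langle i|$; $\mathcal{W}\otimes\mathcal{I}_2$ has alphabet $\mathcal{X}\times\{1,2\}$ and outputs $W_x\otimes|i\rangle\langle i|$. With the Petz Rényi divergence $D_\alpha(\rho\|\sigma)=\frac1{\alpha-1}\log\mathrm{Tr}[\rho^\alpha\sigma^{1-\alpha}]$ ($\alpha\in(0,1)$), $D_1$ the Umegaki relative entropy and $D_0(\rho\|\sigma)=-\log\mathrm{Tr}[\rho^0\sigma]$ ($\rho^0$ the support projection), $C_\alpha(\mathcal{W})=\sup_{p\in\mathcal{P}(\mathcal{X})}\inf_{\sigma}\sum_xp(x)D_\alpha(W_x\|\sigma)$,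 $C(\mathcal{W})=C_1(\mathcal{W})$. *)

From HB Require Import structures.
From mathcomp Require Import all_boot all_order all_algebra.
From mathcomp Require Import sesquilinear spectral.
From mathcomp Require Import complex mxtens.
From mathcomp Require Import classical_sets boolp reals constructive_ereal ereal.
From mathcomp Require Import exp.

Set Implicit Arguments.
Unset Strict Implicit.
Unset Printing Implicit Defensive.

Import Order.TTheory GRing.Theory Num.Theory.
Local Open Scope ring_scope.
Local Open Scope classical_set_scope.

Section QDefs.
Variable R : realType.
Local Notation C := R[i].

Definition cR (x : R) : C := Complex x 0.

Definition retr m (A : 'M[C]_m) : R := complex.Re (\tr A).

Definition psdmx m (A : 'M[C]_m) : Prop :=
  A \is hermsymmx /\
  forall v : 'rV[C]_m, 0 <= (v *m A *m (map_mx Num.conj v)^T) 0 0.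
Definition lemx m (A B : 'M[C]_m) : Prop := psdmx (B - A).

Definition density m (A : 'M[C]_m) : Prop := psdmx A /\ \tr A = 1.

Definition cqchannel (X : finType) m (W : X -> 'M[C]_m) : Prop :=
  forall x, density (W x).

(* functional calculus for Hermitian matrices via the spectral decomposition
   A = P^-1 diag(lambda) P of the library (eigenvalues are real for
   Hermitian A): f(A) = P^-1 diag(f(lambda)) P. *)
Definition mxfun (f : R -> R) m (A : 'M[C]_m) : 'M[C]_m :=
  invmx (spectralmx A) *m
  diag_mx (map_mx (fun z : C => cR (f (complex.Re z))) (spectral_diag A)) *m
  spectralmx A.

Definition absmx m (A : 'M[C]_m) : 'M[C]_m := mxfun Num.norm A.
Definition meetmx m (A B : 'M[C]_m) : 'M[C]_m :=
  (2%:R)^-1 *: (A + B - absmx (A - B)).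
Definition suppmx m (A : 'M[C]_m) : 'M[C]_m :=
  mxfun (fun l => (l != 0)%:R) A.

Definition NS_success (X : finType) m (M : R) (W : X -> 'M[C]_m) : set R :=
  [set y : R | exists (Lam : X -> 'M[C]_m) (p : X -> R),
      [/\ \sum_x Lam x = 1%:M,
          forall x, lemx 0 (Lam x) /\ lemx (Lam x) (cR (p x))%:M,
          forall x, 0 <= p x,
          \sum_x p x = M &
          y = M^-1 * \sum_x retr (Lam x *m W x)]].
Definition eps_NS (X : finType) m (M : R) (W : X -> 'M[C]_m) : \bar R :=
  (1 - ereal_sup (EFin @` NS_success M W))%E.

(* D_0(rho||sigma) = - log Tr[rho^0 sigma]  (= +oo when the trace is 0) *)
Definition D0 m (rho sigma : 'M[C]_m) : \bar R :=
  let Q := retr (suppmx rho *m sigma) in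
  if Q == 0 then +oo%E else (- @ln R Q)%:E.

(* Umegaki relative entropy D(rho||sigma) = Tr[rho (log rho - log sigma)]
   if supp rho <= supp sigma, +oo otherwise (log taken on the supports) *)
Definition D1 m (rho sigma : 'M[C]_m) : \bar R :=
  if suppmx rho *m suppmx sigma == suppmx rho
  then (retr (rho *m (mxfun (@ln R) rho - mxfun (@ln R) sigma)))%:E
  else +oo%E.

Definition prob_dist (X : finType) (p : X -> R) : Prop :=
  (forall x, 0 <= p x) /\ \sum_x p x = 1.

Definition capacity (X : finType) m
    (D : 'M[C]_m -> 'M[C]_m -> \bar R) (W : X -> 'M[C]_m) : \bar R :=
  ereal_sup [set c : \bar R | exists p : X -> R, prob_dist p /\
    c = ereal_inf [set v : \bar R | exists sigma : 'M[C]_m, density sigma /\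
          v = (\sum_x ((p x)%:E * D (W x) sigma))%E]].

Definition C0cap (X : finType) m (W : X -> 'M[C]_m) := capacity (@D0 m) W.
Definition Ccap (X : finType) m (W : X -> 'M[C]_m) := capacity (@D1 m) W.

Fixpoint tens_rec m k : ('I_k.+1 -> 'M[C]_m) -> 'M[C]_(m ^ k.+1) :=
  if k is k'.+1 return ('I_k.+1 -> 'M[C]_m) -> 'M[C]_(m ^ k.+1)
  then fun f => f ord0 *t tens_rec (fun i : 'I_k'.+1 => f (lift ord0 i))
  else fun f => f ord0.
Definition tens_pow m n : ('I_n -> 'M[C]_m) -> 'M[C]_(m ^ n) :=
  if n is k.+1 return ('I_n -> 'M[C]_m) -> 'M[C]_(m ^ n)
  then fun f => tens_rec f else fun _ => 1.

Definition cq_pow (X : finType) m (W : X -> 'M[C]_m) n (w : n.-tuple X)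
  : 'M[C]_(m ^ n) := tens_pow (fun i => W (tnth w i)).

(* W^{(x)n} (x) I_2 : alphabet X^n * {1,2}, outputs W_{x^n} (x) |i><i| *)
Definition chan_pow_I2 (X : finType) m (W : X -> 'M[C]_m) n
  (xi : n.-tuple X * 'I_2) : 'M[C]_(m ^ n * 2) :=
  cq_pow W xi.1 *t delta_mx xi.2 xi.2.

(* types of length n on X, represented by their counts k_x = n T_x *)
Definition types (X : finType) n : set {ffun X -> nat} :=
  [set k | (\sum_x k x)%N = n].

Definition type_word (X : finType) (k : {ffun X -> nat}) : seq X :=
  flatten [seq nseq (k x) x | x <- enum X].

Definition WT (X : finType) m (W : X -> 'M[C]_m) n (k : {ffun X -> nat})
  : 'M[C]_(m ^ n) :=
  if (insub (type_word k) : option (n.-tuple X)) is Some w then cq_pow W w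
  else 0.

Definition gamma_n (X : finType) n : R := (2%:R)^-1 * (n.+1%:R ^- #|X|).

End QDefs.

(* Fix a non-signalling code (Lam, p) for W^{(x)n} (x) I_2 and a positive
   semidefinite B.  For Hermitian H write Tr[H]_+ for the sum of its positive
   eigenvalues; 0 <= Lam <= p 1 gives Tr[Lam H] <= p Tr[H]_+, so the success
   sum is at most sum_xi p_xi Tr[W_x - B]_+ + 2 Tr B, the flag register
   contributing the factor 2.  Group the sequences x by type: as there are at
   most (n+1)^|X| types, one type class carries weight at least
   M (n+1)^-|X|.  With B = (M s / 2) sigma^{(x)n}, which is invariant under
   permutations of the factors, Tr[W_x - B]_+ on that class is at most its
   value at W_T^{(x)n}, and it is at most 1 elsewhere.  Finally convexity of
   Tr[.]_+ and Tr[A /\ B] = Tr A - Tr[A - B]_+ give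
   1 - Tr[W_T^{(x)n} - B]_+ >= Tr[W_T^{(x)n} /\ M s sigma^{(x)n}] / 2. *)

From HB Require Import structures.
From mathcomp Require Import all_boot all_order all_algebra.
From mathcomp Require Import sesquilinear spectral complex mxtens.
From mathcomp Require Import classical_sets boolp reals constructive_ereal ereal exp.
From mathcomp Require Import ring lra.
From mathcomp Require Import fingroup perm.

Set Implicit Arguments.
Unset Strict Implicit.
Unset Printing Implicit Defensive.

Import Order.TTheory GRing.Theory Num.Theory.
Local Open Scope ring_scope.
Local Open Scope classical_set_scope.

Section RealComplex.
Variable R : realType.
Local Notation C := R[i].

Lemma cRD (x y : R) : cR (x + y) = cR x + cR y.
Proof. by apply/eqP; rewrite eq_complex /= addr0 !eqxx. Qed.

Lemma cRB (x y : R) : cR (x - y) = cR x - cR y.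
Proof. by apply/eqP; rewrite eq_complex /= subr0 !eqxx. Qed.

Lemma cRM (x y : R) : cR (x * y) = cR x * cR y.
Proof. by apply/eqP; rewrite eq_complex /= !mulr0 mul0r subr0 addr0 !eqxx. Qed.

Lemma cR1 : cR 1 = 1 :> C.
Proof. by apply/eqP; rewrite eq_complex /= !eqxx. Qed.

Lemma cR_inv2 : cR 2^-1 = 2%:R^-1 :> C.
Proof.
have nz2 : (2%:R : C) != 0 by rewrite pnatr_eq0.
apply: (mulfI nz2); rewrite mulfV //.
have -> : (2%:R : C) = cR 2 by apply/eqP; rewrite eq_complex /= addr0 !eqxx.
by rewrite -cRM mulfV ?cR1 // pnatr_eq0.
Qed.

Lemma cR_ge0 (x : R) : (0 <= cR x) = (0 <= x).
Proof. exact: ler0c. Qed.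

Lemma conj_cR (x : R) : (cR x)^* = cR x.
Proof. exact: conjc_real. Qed.

Lemma Re_ge0 (z : C) : 0 <= z -> 0 <= complex.Re z.
Proof. by rewrite lecE => /andP[]. Qed.

Lemma Re_mulcR (z : C) (x : R) : complex.Re (z * cR x) = complex.Re z * x.
Proof. by case: z => a b /=; rewrite mulr0 subr0. Qed.

Lemma Re_cRmul (x : R) (z : C) : complex.Re (cR x * z) = x * complex.Re z.
Proof. by case: z => a b /=; rewrite mul0r subr0. Qed.

End RealComplex.

Section RealTrace.
Variable R : realType.
Local Notation C := R[i].

Lemma retrD m (A B : 'M[C]_m) : retr (A + B) = retr A + retr B.
Proof. by rewrite /retr mxtraceD raddfD. Qed.

Lemma retrB m (A B : 'M[C]_m) : retr (A - B) = retr A - retr B.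
Proof. by rewrite /retr !raddfB. Qed.

Lemma retrZ m (x : R) (A : 'M[C]_m) : retr (cR x *: A) = x * retr A.
Proof. by rewrite /retr mxtraceZ Re_cRmul. Qed.

Lemma retr_sum m (I : finType) (F : I -> 'M[C]_m) :
  retr (\sum_i F i) = \sum_i retr (F i).
Proof. by rewrite /retr -!raddf_sum. Qed.

Lemma retr_mulmxC m n (A : 'M[C]_(m, n)) (B : 'M[C]_(n, m)) :
  retr (A *m B) = retr (B *m A).
Proof. by rewrite /retr mxtrace_mulC. Qed.

Lemma retr_density m (A : 'M[C]_m) : density A -> retr A = 1.
Proof. by case=> _; rewrite /retr => ->. Qed.

End RealTrace.

Section Loewner.
Variable R : realType.
Local Notation C := R[i].
Local Open Scope sesquilinear_scope.

Lemma adjM m n p (A : 'M[C]_(m, n)) (B : 'M[C]_(n, p)) :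
  (A *m B)^t* = B^t* *m A^t*.
Proof. by rewrite trmx_mul map_mxM. Qed.

Lemma adjD m n (A B : 'M[C]_(m, n)) : (A + B)^t* = A^t* + B^t*.
Proof. by apply/matrixP=> i j; rewrite !mxE rmorphD. Qed.

Lemma adjB m n (A B : 'M[C]_(m, n)) : (A - B)^t* = A^t* - B^t*.
Proof. by apply/matrixP=> i j; rewrite !mxE rmorphB. Qed.

Lemma adjZ m n (x : R) (A : 'M[C]_(m, n)) : (cR x *: A)^t* = cR x *: A^t*.
Proof. by apply/matrixP=> i j; rewrite !mxE rmorphM /= conj_cR. Qed.

Lemma adj_diag_cR m (f : 'I_m -> R) :
  (diag_mx (\row_i cR (f i)))^t* = diag_mx (\row_i cR (f i)).
Proof.
apply/matrixP=> i j; rewrite !mxE eq_sym.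
by case: eqP => [->|_]; rewrite ?mulr1n ?conj_cR // !mulr0n rmorph0.
Qed.

Lemma hermP m (A : 'M[C]_m) : reflect (A = A^t*) (A \is hermsymmx).
Proof. by rewrite qualifE expr0 scale1r; exact: eqP. Qed.

Lemma hermD m (A B : 'M[C]_m) :
  A \is hermsymmx -> B \is hermsymmx -> A + B \is hermsymmx.
Proof. by move=> /hermP hA /hermP hB; apply/hermP; rewrite adjD -hA -hB. Qed.

Lemma hermB m (A B : 'M[C]_m) :
  A \is hermsymmx -> B \is hermsymmx -> A - B \is hermsymmx.
Proof. by move=> /hermP hA /hermP hB; apply/hermP; rewrite adjB -hA -hB. Qed.

Lemma hermZ m (x : R) (A : 'M[C]_m) : A \is hermsymmx -> cR x *: A \is hermsymmx.
Proof. by move=> /hermP hA; apply/hermP; rewrite adjZ -hA. Qed.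

Lemma herm_congr m n (E : 'M[C]_(m, n)) (A : 'M[C]_n) :
  A \is hermsymmx -> E *m A *m E^t* \is hermsymmx.
Proof. by move=> /hermP hA; apply/hermP; rewrite !adjM trmxCK -hA mulmxA. Qed.

Definition qform m (v : 'rV[C]_m) (A : 'M[C]_m) : C := (v *m A *m v^t*) 0 0.

Lemma qformB m (v : 'rV[C]_m) (A B : 'M[C]_m) : qform v (A - B) = qform v A - qform v B.
Proof. by rewrite /qform mulmxBr mulmxBl mxE [in X in _ + X = _]mxE. Qed.

Lemma qformZ m (v : 'rV[C]_m) c (A : 'M[C]_m) : qform v (c *: A) = c * qform v A.
Proof. by rewrite /qform -scalemxAr -scalemxAl mxE. Qed.

Lemma qform_congr m n (E : 'M[C]_(m, n)) (v : 'rV[C]_m) (A : 'M[C]_n) :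
  qform v (E *m A *m E^t*) = qform (v *m E) A.
Proof. by rewrite /qform adjM !mulmxA. Qed.

Lemma qform1_ge0 m (v : 'rV[C]_m) : 0 <= qform v 1%:M.
Proof.
rewrite /qform mulmx1 mxE; apply: sumr_ge0 => k _; rewrite !mxE.
exact: mul_conjC_ge0.
Qed.

Lemma psdE m (A : 'M[C]_m) :
  psdmx A <-> A \is hermsymmx /\ forall v, 0 <= qform v A.
Proof.
by rewrite /psdmx /qform; split=> -[hA hq]; split=> // v; have := hq v;
  rewrite map_trmx.
Qed.

Lemma psd_herm m (A : 'M[C]_m) : psdmx A -> A \is hermsymmx.
Proof. by case/psdE. Qed.

Lemma psd_qform m (A : 'M[C]_m) (v : 'rV[C]_m) : psdmx A -> 0 <= qform v A.
Proof. by case/psdE=> _ ->. Qed.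

Lemma psd0 m : psdmx (0 : 'M[C]_m).
Proof.
apply/psdE; split; first by apply/hermP/matrixP => i j; rewrite !mxE rmorph0.
by move=> v; rewrite /qform mulmx0 mul0mx mxE.
Qed.

Lemma psdZ m (c : R) (A : 'M[C]_m) : 0 <= c -> psdmx A -> psdmx (cR c *: A).
Proof.
move=> c_ge0 /psdE[hA hq]; apply/psdE; split; first exact: hermZ.
by move=> v; rewrite qformZ mulr_ge0 ?cR_ge0.
Qed.

Lemma psd_congr m n (E : 'M[C]_(m, n)) (A : 'M[C]_n) :
  psdmx A -> psdmx (E *m A *m E^t*).
Proof.
move=> /psdE[hA hq]; apply/psdE; split; first exact: herm_congr.
by move=> v; rewrite qform_congr.
Qed.

Lemma psd_gram p m (B : 'M[C]_(p, m)) : psdmx (B^t* *m B).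
Proof.
have -> : B^t* *m B = B^t* *m 1%:M *m (B^t*)^t* by rewrite mulmx1 trmxCK.
apply/psd_congr/psdE; split=> [|v]; last exact: qform1_ge0.
by apply/hermP/matrixP => i j; rewrite !mxE rmorph_nat eq_sym.
Qed.

Lemma retr_mul_congr m n (A : 'M[C]_n) (E : 'M[C]_(m, n)) (B : 'M[C]_m) :
  retr (A *m (E^t* *m B *m E)) = retr ((E *m A *m E^t*) *m B).
Proof. by rewrite !mulmxA retr_mulmxC !mulmxA. Qed.

Lemma scalar_congr_iso m n (E : 'M[C]_(m, n)) c :
  E *m E^t* = 1%:M -> E *m c%:M *m E^t* = c%:M.
Proof. by move=> isoE; rewrite mul_mx_scalar -scalemxAl isoE scalemx1. Qed.

End Loewner.

Section PositivePart.
Variable R : realType.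
Local Notation C := R[i].
Local Open Scope sesquilinear_scope.

Definition eigval m (H : 'M[C]_m) i : R := complex.Re (spectral_diag H 0 i).
Definition pospart (x : R) : R := (x + `|x|) / 2.
Definition trpos m (H : 'M[C]_m) : R := \sum_i pospart (eigval H i).

Lemma spectralmx_mul_adj m (H : 'M[C]_m) : spectralmx H *m (spectralmx H)^t* = 1%:M.
Proof. exact/unitarymxP/spectral_unitarymx. Qed.

Lemma adj_mul_spectralmx m (H : 'M[C]_m) : (spectralmx H)^t* *m spectralmx H = 1%:M.
Proof. exact/mulmx1C/spectralmx_mul_adj. Qed.

Lemma spectral_diag_cR m (H : 'M[C]_m) : H \is hermsymmx ->
  spectral_diag H = \row_i cR (eigval H i).
Proof.
move=> hH; have /mxOverP real_diag := hermitian_spectral_diag_real hH.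
by apply/rowP => i; rewrite mxE; apply/esym/RRe_real/real_diag.
Qed.

Lemma hermitian_spectralE m (H : 'M[C]_m) : H \is hermsymmx ->
  H = (spectralmx H)^t* *m diag_mx (\row_i cR (eigval H i)) *m spectralmx H.
Proof.
move=> hH; have /orthomx_spectralP spectralE := hermitian_normalmx hH.
by rewrite -spectral_diag_cR // -invmx_unitary ?spectral_unitarymx.
Qed.

Lemma spectral_diagonalize m (H : 'M[C]_m) : H \is hermsymmx ->
  spectralmx H *m H *m (spectralmx H)^t* = diag_mx (\row_i cR (eigval H i)).
Proof.
move=> hH; rewrite [in X in _ *m X *m _](hermitian_spectralE hH).
by rewrite !mulmxA spectralmx_mul_adj mul1mx -mulmxA spectralmx_mul_adj mulmx1.
Qed.

Lemma qform_row m n (U : 'M[C]_(n, m)) (L : 'M[C]_m) i :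
  qform (row i U) L = (U *m L *m U^t*) i i.
Proof.
rewrite /qform !mxE; apply: eq_bigr => k _; rewrite !mxE; congr (_ * _).
by apply: eq_bigr => l _; rewrite !mxE.
Qed.

Lemma qform_spectral_row1 m (H : 'M[C]_m) i : qform (row i (spectralmx H)) 1%:M = 1.
Proof. by rewrite qform_row mulmx1 spectralmx_mul_adj mxE eqxx. Qed.

Lemma qform_spectral_row m (H : 'M[C]_m) i : H \is hermsymmx ->
  qform (row i (spectralmx H)) H = cR (eigval H i).
Proof. by move=> hH; rewrite qform_row spectral_diagonalize // !mxE eqxx. Qed.

Lemma retr_mul_hermitian m (H L : 'M[C]_m) : H \is hermsymmx ->
  retr (L *m H) =
  \sum_i complex.Re (qform (row i (spectralmx H)) L) * eigval H i.
Proof.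
move=> hH; rewrite {1}(hermitian_spectralE hH) !mulmxA retr_mulmxC !mulmxA.
rewrite /retr mul_mx_diag /mxtrace raddf_sum /=; apply: eq_bigr => i _.
by rewrite qform_row !mxE Re_mulcR.
Qed.

Lemma retr_eigval m (H : 'M[C]_m) : H \is hermsymmx -> retr H = \sum_i eigval H i.
Proof.
move=> hH; rewrite -{1}[H]mul1mx retr_mul_hermitian //.
by apply: eq_bigr => i _; rewrite qform_spectral_row1 mul1r.
Qed.

Lemma retr_mxfun f m (A : 'M[C]_m) :
  retr (mxfun f A) = \sum_i f (complex.Re (spectral_diag A 0 i)).
Proof.
rewrite /mxfun retr_mulmxC mulmxA mulmxV ?spectral_unit // mul1mx.
by rewrite /retr mxtrace_diag raddf_sum; apply: eq_bigr => i _; rewrite mxE.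
Qed.

Lemma retr_meetmx m (A B : 'M[C]_m) : A - B \is hermsymmx ->
  retr (meetmx A B) = retr A - trpos (A - B).
Proof.
move=> hH; have := retr_eigval hH; rewrite retrB => retrAB.
rewrite /meetmx -cR_inv2 retrZ retrB retrD /absmx retr_mxfun.
by rewrite /trpos /pospart -mulr_suml big_split /= -retrAB /eigval; lra.
Qed.

End PositivePart.

Section PositivePartBounds.
Variable R : realType.
Local Notation C := R[i].
Local Open Scope sesquilinear_scope.

Lemma diag_cR_gram k (f : 'I_k -> R) : (forall i, 0 <= f i) ->
  diag_mx (\row_i cR (f i)) =
  (diag_mx (\row_i cR (Num.sqrt (f i))))^t* *m diag_mx (\row_i cR (Num.sqrt (f i))).
Proof.
move=> f_ge0; rewrite adj_diag_cR mulmx_diag; congr diag_mx; apply/rowP => i.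
by rewrite !mxE -cRM -expr2 sqr_sqrtr.
Qed.

Lemma psd_diag_congr k m (U : 'M[C]_(k, m)) (f : 'I_k -> R) : (forall i, 0 <= f i) ->
  psdmx (U^t* *m diag_mx (\row_i cR (f i)) *m U).
Proof.
by move=> f_ge0; rewrite diag_cR_gram // mulmxA -mulmxA -adjM; exact: psd_gram.
Qed.

Lemma eigval_ge0 m (H : 'M[C]_m) i : psdmx H -> 0 <= eigval H i.
Proof.
move=> hP; have := psd_qform (row i (spectralmx H)) hP.
by rewrite qform_spectral_row ?psd_herm // cR_ge0.
Qed.

Lemma qform_spectral_row_bounds m (H L : 'M[C]_m) (p : R) i :
  psdmx L -> psdmx ((cR p)%:M - L) ->
  0 <= complex.Re (qform (row i (spectralmx H)) L) <= p.
Proof.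
move=> hL hpL; rewrite Re_ge0 ?psd_qform //=.
have := Re_ge0 (psd_qform (row i (spectralmx H)) hpL).
by rewrite qformB -scalemx1 qformZ qform_spectral_row1 mulr1 raddfB subr_ge0.
Qed.

Lemma retr_mul_le_trpos m (H L : 'M[C]_m) (p : R) : H \is hermsymmx ->
  psdmx L -> psdmx ((cR p)%:M - L) -> retr (L *m H) <= p * trpos H.
Proof.
move=> hH hL hpL; rewrite retr_mul_hermitian // /trpos mulr_sumr.
apply: ler_sum => i _; have /andP[a_ge0 a_le] := qform_spectral_row_bounds H i hL hpL.
set a := complex.Re _ in a_ge0 a_le *; rewrite /pospart.
by have [l_ge0|l_lt0] := lerP 0 (eigval H i);
  [rewrite ger0_norm | rewrite ltr0_norm]; nra.
Qed.

Lemma trpos_attained m (H : 'M[C]_m) : H \is hermsymmx ->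
  exists Q, [/\ psdmx Q, psdmx (1%:M - Q) & retr (Q *m H) = trpos H].
Proof.
move=> hH; set U := spectralmx H.
pose chi i : R := if 0 < eigval H i then 1 else 0.
have chi01 i : 0 <= chi i <= 1 by rewrite /chi; case: ifP => _; lra.
exists (U^t* *m diag_mx (\row_i cR (chi i)) *m U); split.
- by apply: psd_diag_congr => i; case/andP: (chi01 i).
- have -> : 1%:M - U^t* *m diag_mx (\row_i cR (chi i)) *m U =
            U^t* *m diag_mx (\row_i cR (1 - chi i)) *m U.
    have -> : diag_mx (\row_i cR (1 - chi i)) = 1%:M - diag_mx (\row_i cR (chi i)).
      apply/matrixP => i j; rewrite !mxE.
      by case: eqP => _; rewrite ?mulr1n ?mulr0n ?subr0 // cRB cR1.
    by rewrite mulmxBr mulmxBl mulmx1 adj_mul_spectralmx.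
  by apply: psd_diag_congr => i; case/andP: (chi01 i); lra.
- rewrite retr_mul_hermitian // /trpos; apply: eq_bigr => i _.
  rewrite qform_row !mulmxA spectralmx_mul_adj mul1mx -mulmxA spectralmx_mul_adj.
  rewrite mulmx1 !mxE eqxx /= /chi /pospart; case: ifP => [l_gt0|/negbT].
    by rewrite ger0_norm ?ltW //; lra.
  by rewrite -leNgt => l_le0; rewrite ler0_norm //; lra.
Qed.

Lemma retr_mul_psd_ge0 m (P H : 'M[C]_m) :
  psdmx P -> psdmx H -> 0 <= retr (P *m H).
Proof.
move=> hP hH; rewrite retr_mul_hermitian ?psd_herm //; apply: sumr_ge0 => i _.
by rewrite mulr_ge0 ?eigval_ge0 ?Re_ge0 ?psd_qform.
Qed.

Lemma retr_mul_le_retr m (Q H : 'M[C]_m) :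
  psdmx Q -> psdmx (1%:M - Q) -> psdmx H -> retr (Q *m H) <= retr H.
Proof.
move=> hQ hQ1 hH; have hHh := psd_herm hH.
rewrite retr_mul_hermitian // retr_eigval //; apply: ler_sum => i _.
have hQ1' : psdmx ((cR 1)%:M - Q) by rewrite cR1.
have /andP[a_ge0 a_le1] := qform_spectral_row_bounds H i hQ hQ1'.
by have := eigval_ge0 i hH; nra.
Qed.

Lemma trpos_sub_psd_le m (A B : 'M[C]_m) :
  psdmx A -> psdmx B -> trpos (A - B) <= retr A.
Proof.
move=> hA hB; have [Q [hQ hQ1 <-]] := trpos_attained (hermB (psd_herm hA) (psd_herm hB)).
rewrite mulmxBr retrB.
by have := retr_mul_le_retr hQ hQ1 hA; have := retr_mul_psd_ge0 hQ hB; lra.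
Qed.

Lemma trpos_isometry_le m n (H : 'M[C]_m) (P : 'M[C]_(n, m)) :
  H \is hermsymmx -> P^t* *m P = 1%:M -> trpos (P *m H *m P^t*) <= trpos H.
Proof.
move=> hH isoP; have [Q [hQ hQ1 <-]] := trpos_attained (herm_congr P hH).
rewrite !mulmxA retr_mulmxC !mulmxA -[trpos H]mul1r.
apply: retr_mul_le_trpos => //.
  by rewrite -{2}[P]trmxCK; apply: psd_congr.
have -> : (cR 1)%:M - P^t* *m Q *m P = P^t* *m (1%:M - Q) *m (P^t*)^t*.
  by rewrite trmxCK mulmxBr mulmxBl mulmx1 isoP cR1.
exact: psd_congr.
Qed.

Lemma trpos_midpoint_le m (A B : 'M[C]_m) : A \is hermsymmx -> B \is hermsymmx ->
  trpos (cR 2^-1 *: (A + B)) <= 2^-1 * trpos A + 2^-1 * trpos B.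
Proof.
move=> hA hB; have [Q [hQ hQ1 <-]] := trpos_attained (hermZ 2^-1 (hermD hA hB)).
rewrite -scalemxAr retrZ mulmxDr retrD mulrDr.
have hQ1' : psdmx ((cR 1)%:M - Q) by rewrite cR1.
have := retr_mul_le_trpos hA hQ hQ1'; have := retr_mul_le_trpos hB hQ hQ1'.
by rewrite !mul1r => leB leA; apply: lerD; apply: ler_wpM2l => //; lra.
Qed.

Lemma half_retr_meetmx_le m (A B : 'M[C]_m) : density A -> psdmx B ->
  2^-1 * retr (meetmx A B) <= 1 - trpos (A - cR 2^-1 *: B).
Proof.
move=> densA hB; have [hA _] := densA; have hAB := hermB (psd_herm hA) (psd_herm hB).
have halfE : A - cR 2^-1 *: B = cR 2^-1 *: (A + (A - B)).
  rewrite scalerDr scalerBr addrA -scalerDl -cRD.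
  have -> : (2^-1 + 2^-1 : R) = 1 by lra.
  by rewrite cR1 scale1r.
have := trpos_midpoint_le (psd_herm hA) hAB; rewrite -halfE.
have := trpos_sub_psd_le hA (psd0 R m); rewrite subr0.
by rewrite retr_meetmx // retr_density //; lra.
Qed.

End PositivePartBounds.

Section TensorProducts.
Variable R : realType.
Local Notation C := R[i].
Local Open Scope sesquilinear_scope.

Lemma adj_tens m n p q (A : 'M[C]_(m, n)) (B : 'M[C]_(p, q)) :
  (A *t B)^t* = A^t* *t B^t*.
Proof. by rewrite trmx_tens map_mxT. Qed.

Lemma psd_factor m (A : 'M[C]_m) : psdmx A -> exists S : 'M[C]_m, A = S^t* *m S.
Proof.
move=> hA; exists (diag_mx (\row_i cR (Num.sqrt (eigval A i))) *m spectralmx A).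
rewrite adjM {1}(hermitian_spectralE (psd_herm hA)) diag_cR_gram; first by rewrite !mulmxA.
by move=> i; exact: eigval_ge0.
Qed.

Lemma psd_tens m n (A : 'M[C]_m) (B : 'M[C]_n) :
  psdmx A -> psdmx B -> psdmx (A *t B).
Proof.
move=> /psd_factor[S ->] /psd_factor[T ->].
by rewrite -tensmx_mul -adj_tens; exact: psd_gram.
Qed.

Lemma mxtrace_tens m n (A : 'M[C]_m) (B : 'M[C]_n) : \tr (A *t B) = \tr A * \tr B.
Proof.
rewrite /mxtrace (reindex (@mxtens_index m n)) /=; last first.
  by exists (@mxtens_unindex m n) => x _; rewrite ?mxtens_indexK ?mxtens_unindexK.
rewrite mulr_suml; under [RHS]eq_bigr do rewrite mulr_sumr.
by rewrite pair_big /=; apply: eq_bigr => -[i j] _; rewrite tensmxE.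
Qed.

Lemma density_tens m n (A : 'M[C]_m) (B : 'M[C]_n) :
  density A -> density B -> density (A *t B).
Proof.
by move=> [hA trA] [hB trB]; split; [exact: psd_tens | rewrite mxtrace_tens trA trB mulr1].
Qed.

Lemma density_tens_rec m k (f : 'I_k.+1 -> 'M[C]_m) :
  (forall i, density (f i)) -> density (tens_rec f).
Proof.
elim: k f => [|k IHk] f hf /=; first exact: hf.
by apply: density_tens => //; apply: IHk.
Qed.

Lemma tens_rec_const m k (A : 'M[C]_m) : tens_rec (fun _ : 'I_k.+1 => A) = ntensmx A k.+1.
Proof. by rewrite /ntensmx; elim: k => [|k /= ->]. Qed.

Lemma density_ntensmx m k (A : 'M[C]_m) : density A -> density (ntensmx A k.+1).
Proof. by move=> densA; rewrite -tens_rec_const; apply: density_tens_rec. Qed.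

(* [slicemx N i] is 1_N (x) <i|. *)
Definition slicemx N p (i : 'I_p) : 'M[C]_(N, N * p) :=
  \matrix_(a, b) ((b == mxtens_index (a, i))%:R).

Lemma sum_slice N p (i j : 'I_p) (a : 'I_N) (F : 'I_N -> C) :
  \sum_c (mxtens_index (a, j) == mxtens_index (c, i))%:R * F c = (j == i)%:R * F a.
Proof.
under eq_bigr do rewrite (inj_eq (can_inj (@mxtens_indexK _ _))) xpair_eqE.
case: (j == i); last by rewrite mul0r big1 // => c _; rewrite andbF mul0r.
rewrite mul1r (bigD1 a) //= eqxx mul1r big1 ?addr0 // => c ca.
by rewrite eq_sym (negbTE ca) mul0r.
Qed.

Lemma slicemx_iso N p (i : 'I_p) : slicemx N i *m (slicemx N i)^t* = 1%:M.
Proof.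
apply/matrixP => a a'; rewrite !mxE.
under eq_bigr do rewrite !mxE rmorph_nat.
rewrite (bigD1 (mxtens_index (a, i))) //= eqxx mul1r big1 ?addr0.
  by rewrite (inj_eq (can_inj (@mxtens_indexK _ _))) xpair_eqE eqxx andbT eq_sym.
by move=> b /negbTE ->; rewrite mul0r.
Qed.

Lemma tens_delta_slice N p (A : 'M[C]_N) (i : 'I_p) :
  A *t delta_mx i i = (slicemx N i)^t* *m A *m slicemx N i.
Proof.
apply/matrixP => u v.
case: (mxtens_indexP u) => a j; case: (mxtens_indexP v) => b l.
rewrite tensmxE !mxE.
under eq_bigr do rewrite !mxE.
under eq_bigr => c' _.
  rewrite (eq_bigr (fun c => (mxtens_index (a, j) == mxtens_index (c, i))%:R * A c c'));
    last by move=> c _; rewrite !mxE rmorph_nat.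
  rewrite sum_slice mulrC.
  over.
rewrite /= sum_slice.
by case: (j == i); case: (l == i); rewrite /= ?mul0r ?mul1r ?mulr0 ?mulr1.
Qed.

End TensorProducts.

Arguments slicemx {R} N {p} i.
Arguments slicemx_iso {R} N {p} i.

Section TensorPermutation.
Variable R : realType.
Local Notation C := R[i].
Local Open Scope sesquilinear_scope.
Variable m : nat.

(* Digits are listed in the order of the factors of tens_rec. *)
Fixpoint tens_digits k : 'I_(m ^ k.+1) -> 'I_k.+1 -> 'I_m :=
  if k is k'.+1 return 'I_(m ^ k.+1) -> 'I_k.+1 -> 'I_m then
    fun a j => match unlift ord0 j with
               | None => (@mxtens_unindex m (m ^ k'.+1) a).1
               | Some j' => tens_digits (@mxtens_unindex m (m ^ k'.+1) a).2 j'
               end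
  else fun a _ => a.

Fixpoint tens_of_digits k : ('I_k.+1 -> 'I_m) -> 'I_(m ^ k.+1) :=
  if k is k'.+1 return ('I_k.+1 -> 'I_m) -> 'I_(m ^ k.+1) then
    fun g => @mxtens_index m (m ^ k'.+1)
               (g ord0, tens_of_digits (fun j => g (lift ord0 j)))
  else fun g => g ord0.

Lemma tens_digitsS k a j : @tens_digits k.+1 a j =
  match unlift ord0 j with
  | None => (@mxtens_unindex m (m ^ k.+1) a).1
  | Some j' => tens_digits (@mxtens_unindex m (m ^ k.+1) a).2 j'
  end.
Proof. by []. Qed.

Lemma tens_of_digitsS k g : @tens_of_digits k.+1 g =
  @mxtens_index m (m ^ k.+1) (g ord0, tens_of_digits (fun j => g (lift ord0 j))).
Proof. by []. Qed.

Lemma eq_tens_of_digits k (g g' : 'I_k.+1 -> 'I_m) :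
  g =1 g' -> tens_of_digits g = tens_of_digits g'.
Proof.
elim: k g g' => [|k IHk] g g' eq_g /=; first exact: eq_g.
by rewrite eq_g (IHk _ (fun j => g' (lift ord0 j))).
Qed.

Lemma tens_of_digitsK k (g : 'I_k.+1 -> 'I_m) j : tens_digits (tens_of_digits g) j = g j.
Proof.
elim: k g j => [|k IHk] g j; first by rewrite /= [j]ord1.
rewrite tens_of_digitsS tens_digitsS mxtens_indexK.
by case: (unliftP ord0 j) => [j'|] -> //=; rewrite IHk.
Qed.

Lemma tens_digitsK k (a : 'I_(m ^ k.+1)) : tens_of_digits (tens_digits a) = a.
Proof.
elim: k a => [|k IHk] a //.
rewrite tens_of_digitsS tens_digitsS unlift_none.
rewrite (eq_tens_of_digits (g' := tens_digits (mxtens_unindex a).2)).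
  by rewrite IHk -surjective_pairing mxtens_unindexK.
by move=> j; rewrite tens_digitsS liftK.
Qed.

Lemma tens_recE k (f : 'I_k.+1 -> 'M[C]_m) a b :
  tens_rec f a b = \prod_j f j (tens_digits a j) (tens_digits b j).
Proof.
elim: k f a b => [|k IHk] f a b; first by rewrite /= big_ord1.
rewrite [tens_rec f]/= mxE big_ord_recl !tens_digitsS !unlift_none IHk.
by congr (_ * _); apply: eq_bigr => j _; rewrite !tens_digitsS !liftK.
Qed.

Variables (k : nat) (pi : {perm 'I_k.+1}).

Definition perm_index (a : 'I_(m ^ k.+1)) : 'I_(m ^ k.+1) :=
  tens_of_digits (fun j => tens_digits a (pi j)).

Lemma perm_index_inj : injective perm_index.
Proof.
move=> a b eq_ab; rewrite -(tens_digitsK a) -(tens_digitsK b).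
apply: eq_tens_of_digits => j; rewrite -(permKV pi j).
by rewrite -!(tens_of_digitsK (fun j => tens_digits _ (pi j))) -/(perm_index _) eq_ab.
Qed.

Definition permmx : 'M[C]_(m ^ k.+1) := \matrix_(a, b) ((b == perm_index a)%:R).

Lemma permmx_iso : permmx *m permmx^t* = 1%:M.
Proof.
apply/matrixP => a b; rewrite !mxE.
under eq_bigr do rewrite !mxE rmorph_nat.
rewrite (bigD1 (perm_index a)) //= eqxx mul1r big1 ?addr0.
  by rewrite (inj_eq perm_index_inj) eq_sym.
by move=> c /negbTE ->; rewrite mul0r.
Qed.

Lemma permmx_congrE (A : 'M[C]_(m ^ k.+1)) a b :
  (permmx *m A *m permmx^t*) a b = A (perm_index a) (perm_index b).
Proof.
rewrite !mxE.
under eq_bigr => c' _.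
  rewrite mxE (eq_bigr (fun c => (c == perm_index a)%:R * A c c'));
    last by move=> c _; rewrite !mxE.
  rewrite (bigD1 (perm_index a)) //= eqxx mul1r big1 ?addr0;
    last by move=> c /negbTE ->; rewrite mul0r.
  rewrite !mxE rmorph_nat.
  over.
rewrite /= (bigD1 (perm_index b)) //= eqxx mulr1 big1 ?addr0 //.
by move=> c /negbTE ->; rewrite mulr0.
Qed.

Lemma permmx_tens_rec (f : 'I_k.+1 -> 'M[C]_m) :
  permmx *m tens_rec f *m permmx^t* = tens_rec (fun j => f (pi^-1 j)%g).
Proof.
apply/matrixP => a b; rewrite permmx_congrE !tens_recE /perm_index.
under eq_bigr do rewrite !tens_of_digitsK.
rewrite [RHS](reindex_inj (@perm_inj _ pi)) /=.
by apply: eq_bigr => j _; rewrite permK.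
Qed.

End TensorPermutation.

Lemma exists_heavy_fiber (R : realDomainType) (I J : finType) (j0 : J)
    (h : I -> J) (q : I -> R) :
  exists j, \sum_i q i <= #|J|%:R * \sum_(i | h i == j) q i.
Proof.
pose S j := \sum_(i | h i == j) q i.
have [j _ S_max] := @arg_maxP _ _ J j0 xpredT S isT.
exists j; rewrite (partition_big h xpredT) //= -/S.
apply: le_trans (ler_sum _ (fun j' _ => S_max j' isT)) _.
by rewrite sumr_const mulr_natl (@eq_card _ xpredT J).
Qed.

Lemma sum_mul_le_class (R : realDomainType) (I : finType) (P : pred I)
    (p F : I -> R) (c : R) :
  (forall i, 0 <= p i) -> (forall i, F i <= 1) -> (forall i, P i -> F i <= c) ->
  \sum_i p i * F i <= \sum_i p i - (\sum_(i | P i) p i) * (1 - c).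
Proof.
move=> p_ge0 F_le1 F_le_c.
rewrite [\sum_i p i * F i](bigID P) [\sum_i p i](bigID P) /= mulrBr mulr1 mulr_suml.
have in_P : \sum_(i | P i) p i * F i <= \sum_(i | P i) p i * c.
  by apply: ler_sum => i Pi; rewrite ler_wpM2l ?F_le_c.
have out_P : \sum_(i | ~~ P i) p i * F i <= \sum_(i | ~~ P i) p i.
  by apply: ler_sum => i _; rewrite ler_piMr.
lra.
Qed.

Lemma error_bound_arith (R : realFieldType) (M K Q S g t s : R) :
  0 < M -> 0 < K -> 0 <= g -> M <= K * Q -> S <= M - Q * g + M * s -> t <= g ->
  K^-1 * t - s <= 1 - M^-1 * S.
Proof.
move=> M_gt0 K_gt0 g_ge0 MKQ S_le t_le.
have mean_S : M^-1 * S <= 1 - M^-1 * Q * g + s.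
  have -> : 1 - M^-1 * Q * g + s = M^-1 * (M - Q * g + M * s).
    by field; rewrite gt_eqF.
  by rewrite ler_pM2l ?invr_gt0.
have weight : K^-1 <= M^-1 * Q.
  by rewrite ler_pdivlMl // mulrC ler_pdivrMl.
have Kinv_ge0 : 0 <= K^-1 by rewrite invr_ge0 ltW.
have := ler_wpM2r g_ge0 weight; have := ler_wpM2l Kinv_ge0 t_le.
lra.
Qed.

Section Types.
Variable X : finType.

Definition tcount n (x : n.-tuple X) : {ffun X -> nat} := [ffun a => count_mem a x].

Lemma sum_count_mem (s : seq X) : (\sum_a count_mem a s)%N = size s.
Proof.
elim: s => [|y s IHs] /=; first by rewrite big1.
rewrite big_split /= IHs (bigD1 y) //= eqxx big1 // => a ay.
by rewrite eq_sym (negbTE ay).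
Qed.

Lemma tcount_types n (x : n.-tuple X) : types n (tcount x).
Proof.
by rewrite /types /=; under eq_bigr do rewrite ffunE; rewrite sum_count_mem size_tuple.
Qed.

Lemma count_type_word (k : {ffun X -> nat}) a : count_mem a (type_word k) = k a.
Proof.
rewrite /type_word count_flatten -map_comp.
under eq_map do rewrite /= count_nseq.
rewrite sumnE big_map big_enum /= (bigD1 a) //= eqxx mul1n big1 ?addn0 //.
by move=> b /negbTE ->.
Qed.

Lemma size_type_word_tcount n (x : n.-tuple X) : size (type_word (tcount x)) == n.
Proof.
apply/eqP; rewrite -[RHS](size_tuple x) -!sum_count_mem.
by apply: eq_bigr => a _; rewrite count_type_word ffunE.
Qed.

Definition type_tuple n (x : n.-tuple X) : n.-tuple X := Tuple (size_type_word_tcount x).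

Lemma perm_eq_type_tuple n (x y : n.-tuple X) :
  tcount x = tcount y -> perm_eq x (type_tuple y).
Proof.
by move=> xy; apply/allP => a _; rewrite /= count_type_word -xy ffunE.
Qed.

Lemma WT_tcount (R : realType) m (W : X -> 'M[R[i]]_m) n (x : n.-tuple X) :
  WT W n (tcount x) = cq_pow W (type_tuple x).
Proof. by rewrite /WT (insubT (fun s : seq X => size s == n) (size_type_word_tcount x)). Qed.

(* Types of length n inject into this finite type of (n+1)^|X| elements. *)
Definition type_code n (x : n.-tuple X) : {ffun X -> 'I_n.+1} :=
  [ffun a => inord (tcount x a)].

Lemma type_code_eq n (x y : n.-tuple X) :
  (type_code x == type_code y) = (tcount x == tcount y).
Proof.
have count_lt (z : n.-tuple X) a : (count_mem a z < n.+1)%N.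
  by rewrite ltnS -[n in (_ <= n)%N](size_tuple z) count_size.
apply/eqP/eqP => [xy|xy]; last by rewrite /type_code xy.
apply/ffunP => a.
have := congr1 (fun g : {ffun X -> 'I_n.+1} => val (g a)) xy.
by rewrite /= !ffunE !inordK ?count_lt.
Qed.

Lemma heavy_type_class (R : realDomainType) (I : finType) n
    (f : I -> n.-tuple X) (q : I -> R) :
  0 < \sum_i q i -> exists i0,
    \sum_i q i <= n.+1%:R ^+ #|X| * \sum_(i | tcount (f i) == tcount (f i0)) q i.
Proof.
move=> q_gt0.
have [t heavy] := exists_heavy_fiber [ffun=> ord0] (fun i => type_code (f i)) q.
rewrite card_ffun card_ord natrX in heavy.
have [i0 /eqP code_i0|no_code] := pickP (fun i => type_code (f i) == t); last first.
  move: heavy; rewrite [X in _ * X](eq_bigl xpred0) // big_pred0_eq mulr0.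
  by move=> /(lt_le_trans q_gt0); rewrite ltxx.
exists i0; congr (_ <= _ * _): heavy.
by apply: eq_bigl => i; rewrite -code_i0 type_code_eq.
Qed.

End Types.

Section NonsignallingConverse.
Variable R : realType.
Local Notation C := R[i].
Local Open Scope sesquilinear_scope.

Section SuccessBound.
Variables (Y : finType) (N : nat) (V : Y -> 'M[C]_N) (B : 'M[C]_N).
Variables (Lam : Y * 'I_2 -> 'M[C]_(N * 2)) (p : Y * 'I_2 -> R).
Hypothesis psdV : forall y, psdmx (V y).
Hypothesis psdB : psdmx B.
Hypothesis sumLam : \sum_yi Lam yi = 1%:M.
Hypothesis Lam_bounds : forall yi, psdmx (Lam yi) /\ psdmx ((cR (p yi))%:M - Lam yi).

Lemma retr_mul_tens_delta_le yi :
  retr (Lam yi *m (V yi.1 *t delta_mx yi.2 yi.2)) <=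
  p yi * trpos (V yi.1 - B) + retr (Lam yi *m (B *t delta_mx yi.2 yi.2)).
Proof.
case: yi => y i /=; have [hL hpL] := Lam_bounds (y, i).
rewrite !tens_delta_slice !retr_mul_congr.
rewrite -[X in retr (_ *m X)](subrK B) mulmxDr retrD lerD2r.
apply: retr_mul_le_trpos; first exact: hermB (psd_herm (psdV y)) (psd_herm psdB).
  exact: psd_congr.
rewrite -(scalar_congr_iso (cR (p (y, i))) (slicemx_iso N i)) -mulmxBl -mulmxBr.
exact: psd_congr.
Qed.

Lemma sum_retr_mul_tens_delta j :
  \sum_yi retr (Lam yi *m (B *t delta_mx j j)) = retr B.
Proof.
rewrite -retr_sum -mulmx_suml sumLam mul1mx tens_delta_slice retr_mulmxC mulmxA.
by rewrite slicemx_iso mul1mx.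
Qed.

Lemma success_le_trpos :
  \sum_yi retr (Lam yi *m (V yi.1 *t delta_mx yi.2 yi.2)) <=
  \sum_yi p yi * trpos (V yi.1 - B) + 2 * retr B.
Proof.
pose T yi j := retr (Lam yi *m (B *t delta_mx j j)).
have T_ge0 yi j : 0 <= T yi j.
  apply: retr_mul_psd_ge0; first by case: (Lam_bounds yi).
  by rewrite tens_delta_slice -{2}[slicemx N j]trmxCK; apply: psd_congr.
apply: le_trans (ler_sum _ (fun yi _ => retr_mul_tens_delta_le yi)) _.
rewrite big_split lerD2l /=.
apply: (@le_trans _ _ (\sum_yi \sum_j T yi j)).
  by apply: ler_sum => yi _; rewrite (bigD1 yi.2) //= lerDl sumr_ge0.
rewrite exchange_big /= /T.
by under eq_bigr do rewrite sum_retr_mul_tens_delta; rewrite sumr_const card_ord mulr_natl.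
Qed.

End SuccessBound.

Section TensorPowerChannel.
Variables (X : finType) (d : nat) (W : X -> 'M[C]_d) (k : nat).
Hypothesis cqW : cqchannel W.
Local Notation n := k.+1.

Lemma density_cq_pow (w : n.-tuple X) : density (cq_pow W w).
Proof. exact: density_tens_rec. Qed.

Lemma trpos_cq_pow_le1 (B : 'M[C]_(d ^ n)) (w : n.-tuple X) :
  psdmx B -> trpos (cq_pow W w - B) <= 1.
Proof.
move=> hB; rewrite -(retr_density (density_cq_pow w)).
exact: trpos_sub_psd_le (density_cq_pow w).1 hB.
Qed.

Lemma trpos_cq_pow_perm_le (x w : n.-tuple X) (sg : 'M[C]_d) (c : R) :
  density sg -> perm_eq x w ->
  trpos (cq_pow W x - cR c *: ntensmx sg n) <=
  trpos (cq_pow W w - cR c *: ntensmx sg n).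
Proof.
move=> hsg /tuple_permP[q xq].
set P := @permmx R d k (q^-1)%g.
have PW : P *m cq_pow W w *m P^t* = cq_pow W x.
  rewrite /cq_pow /= permmx_tens_rec; congr tens_rec; apply: boolp.funext => j.
  by rewrite invgK (_ : x = [tuple tnth w (q i) | i < n]) ?tnth_mktuple //; apply: val_inj.
have Psg : P *m ntensmx sg n *m P^t* = ntensmx sg n.
  by rewrite -tens_rec_const permmx_tens_rec.
have -> : cq_pow W x - cR c *: ntensmx sg n =
          P *m (cq_pow W w - cR c *: ntensmx sg n) *m P^t*.
  by rewrite mulmxBr mulmxBl PW -scalemxAr -scalemxAl Psg.
apply: trpos_isometry_le; last exact/mulmx1C/permmx_iso.
apply: hermB; first exact: psd_herm (density_cq_pow w).1.
by apply/hermZ/psd_herm; exact: (density_ntensmx k hsg).1.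
Qed.

Lemma sum_trpos_type_class_le (p : n.-tuple X * 'I_2 -> R) (x0 : n.-tuple X)
    (sg : 'M[C]_d) (c : R) :
  (forall xi, 0 <= p xi) -> density sg -> 0 <= c ->
  \sum_xi p xi * trpos (cq_pow W xi.1 - cR c *: ntensmx sg n) <=
  \sum_xi p xi - (\sum_(xi | tcount xi.1 == tcount x0) p xi) *
                 (1 - trpos (cq_pow W (type_tuple x0) - cR c *: ntensmx sg n)).
Proof.
move=> p_ge0 hsg c_ge0; apply: sum_mul_le_class => // [xi|xi /eqP class_xi].
  by apply/trpos_cq_pow_le1/psdZ => //; exact: (density_ntensmx k hsg).1.
exact: trpos_cq_pow_perm_le hsg (perm_eq_type_tuple class_xi).
Qed.

Lemma ns_success_bound (M : nat) (Lam : n.-tuple X * 'I_2 -> 'M[C]_(d ^ n * 2))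
    (p : n.-tuple X * 'I_2 -> R) :
  (0 < M)%N -> \sum_xi Lam xi = 1%:M ->
  (forall xi, psdmx (Lam xi) /\ psdmx ((cR (p xi))%:M - Lam xi)) ->
  (forall xi, 0 <= p xi) -> \sum_xi p xi = M%:R ->
  exists2 kk, types n kk & forall (sg : 'M[C]_d) (s : R), density sg -> 0 <= s ->
    gamma_n R X n * retr (meetmx (WT W n kk) (cR (M%:R * s) *: ntensmx sg n)) - s
    <= 1 - M%:R^-1 * \sum_xi retr (Lam xi *m chan_pow_I2 W xi).
Proof.
move=> M_gt0 sumLam Lam_bounds p_ge0 sum_p.
have sum_p_gt0 : 0 < \sum_xi p xi by rewrite sum_p ltr0n.
have [xi0 heavy] := heavy_type_class (fun xi : n.-tuple X * 'I_2 => xi.1) sum_p_gt0.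
exists (tcount xi0.1) => [|sg s hsg s_ge0]; first exact: tcount_types.
have Ms_ge0 : 0 <= M%:R * s by rewrite mulr_ge0 ?ler0n.
have psd_sg := (density_ntensmx k hsg).1.
set c := 2^-1 * (M%:R * s); set B := cR c *: ntensmx sg n.
have c_ge0 : 0 <= c by rewrite mulr_ge0 ?invr_ge0 ?ler0n.
have psdB : psdmx B by exact: psdZ.
have success := success_le_trpos (fun xi => (density_cq_pow xi).1) psdB sumLam Lam_bounds.
have class_le := sum_trpos_type_class_le xi0.1 p_ge0 hsg c_ge0.
have meet_le := half_retr_meetmx_le (density_cq_pow (type_tuple xi0.1)) (psdZ Ms_ge0 psd_sg).
rewrite scalerA -cRM -/c -/B in meet_le; rewrite -/B sum_p in class_le.
rewrite WT_tcount /gamma_n; set K := k.+2%:R ^+ #|X| in heavy *.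
rewrite sum_p in heavy; rewrite [_ * K^-1]mulrC -mulrA.
apply: (error_bound_arith _ _ _ heavy _ meet_le) => //.
- by rewrite ltr0n.
- by rewrite exprn_gt0 ?ltr0n.
- by rewrite subr_ge0 trpos_cq_pow_le1.
apply: le_trans success _; rewrite retrZ (retr_density (density_ntensmx k hsg)) mulr1.
by rewrite /c mulrA mulfV ?pnatr_eq0 // mul1r lerD2r.
Qed.

End TensorPowerChannel.

End NonsignallingConverse.

Lemma lee_swap_oneB (R : realType) (x y : \bar R) : (y <= 1 - x -> x <= 1 - y)%E.
Proof.
case: x => [x||]; case: y => [y||] //=; rewrite ?leey ?leNye //.
by rewrite -!EFinD !lee_fin; lra.
Qed.

Unset Implicit Arguments.

Theorem lemma1 (R : realType) (X : finType) (d : nat) (W : X -> 'M[R[i]]_d)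
    (n M : nat) (r : R) :
  cqchannel W -> (0 < n)%N -> (0 < M)%N ->
  (C0cap W < r%:E)%E -> (r%:E < Ccap W)%E ->
  (ereal_inf [set v : \bar R | exists k, @types X n k /\
     v = ereal_sup [set u : \bar R | exists (sigma : 'M[R[i]]_d) (s : R),
           [/\ density sigma, (0 <= s)%R &
               u = ((gamma_n R X n *
                     retr (meetmx (WT W n k)
                                  (cR (M%:R * s) *: ntensmx sigma n)) - s)%R)%:E]]]
   <= eps_NS M%:R (chan_pow_I2 W (n:=n)))%E.
Proof.
move=> cqW n_gt0 M_gt0 _ _; case: n n_gt0 => [//|k] _.
rewrite /eps_NS; apply: lee_swap_oneB.
apply: ge_ereal_sup => _ [_ [Lam [p [sumLam Lam_le p_ge0 sum_p ->]]] <-].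
apply: lee_swap_oneB; rewrite -EFinB.
have Lam_bounds xi : psdmx (Lam xi) /\ psdmx ((cR (p xi))%:M - Lam xi).
  by case: (Lam_le xi); rewrite /lemx subr0.
have [kk types_kk bound] := ns_success_bound cqW M_gt0 sumLam Lam_bounds p_ge0 sum_p.
apply: le_trans (ereal_inf_lbound _) _; first by exists kk.
by apply: ge_ereal_sup => _ [sg [s [hsg s_ge0 ->]]]; rewrite lee_fin bound.
Qed.
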